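(* Let $k(\bm{x},\bm{x}')=\kappa(\|\bm{x}-\bm{x}'\|)$ be a symmetric positive semidefinite isotropic kernel on $\mathbb{R}^d$ with $\kappa:[0,\infty)\to\mathbb{R}$ non-increasing. Let $\sigma_n^2>0$, let $\mathbb{D}_N^x=\{\bm{x}^{(i)}\}_{i=1}^N$ be an input training data set with GP posterior variance $\sigma_N^2(\cdot)$, and for $\rho>0$ let $\mathbb{B}_\rho(\bm{x})=\{\bm{x}'\in\mathbb{D}_N^x:\|\bm{x}'-\bm{x}\|\le\rho\}$. Then for every $\bm{x}$ and every $\rho>0$ with $|\mathbb{B}_\rho(\bm{x})|\ge1$ and $\kappa(\rho)\ge0$, $$\sigma_N^2(\bm{x})\le\kappa(0)-\frac{\kappa(\rho)^2}{\kappa(0)+\frac{\sigma_n^2}{|\mathbb{B}_\rho(\bm{x})|}}.$$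
   Context: Gaussian process posterior variance: given a kernel $k$, noise variance $\sigma_n^2>0$ and training inputs $\bm{x}^{(1)},\dots,\bm{x}^{(N)}$, define $K_{N,ij}=k(\bm{x}^{(i)},\bm{x}^{(j)})$, $k_{N,i}(\bm{x})=k(\bm{x},\bm{x}^{(i)})$, $\bm{A}_N=\bm{K}_N+\sigma_n^2\bm{I}_N$, and $\sigma_N^2(\bm{x})=k(\bm{x},\bm{x})-\bm{k}_N(\bm{x})^T\bm{A}_N^{-1}\bm{k}_N(\bm{x})$. $|\cdot|$ denotes cardinality (training points counted with multiplicity). *)

(* the statement is purely algebraic/order-theoretic, so we
   state it over an arbitrary real closed field R (this includes the reals). *)
From HB Require Import structures.
From mathcomp Require Import all_boot all_order all_algebra.
Set Implicit Arguments. Unset Strict Implicit. Unset Printing Implicit Defensive.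
Import Order.TTheory GRing.Theory Num.Theory.
Local Open Scope ring_scope.

Definition enorm (R : rcfType) (d : nat) (x : 'rV[R]_d) : R :=
  Num.sqrt (\sum_(i < d) x 0 i ^+ 2).

Definition iso_kernel (R : rcfType) (d : nat) (kappa : R -> R)
  (x x' : 'rV[R]_d) : R := kappa (enorm (x - x')).

Definition psd_kernel (R : rcfType) (d : nat) (k : 'rV[R]_d -> 'rV[R]_d -> R) : Prop :=
  forall (n : nat) (y : 'I_n -> 'rV[R]_d) (c : 'I_n -> R),
    0 <= \sum_(i < n) \sum_(j < n) c i * c j * k (y i) (y j).

Definition symmetric_kernel (R : rcfType) (d : nat) (k : 'rV[R]_d -> 'rV[R]_d -> R) : Prop :=
  forall x x', k x x' = k x' x.

Definition nonincreasing_on_nonneg (R : rcfType) (kappa : R -> R) : Prop :=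
  forall a b : R, 0 <= a -> a <= b -> kappa b <= kappa a.

Definition gram (R : rcfType) (d N : nat) (k : 'rV[R]_d -> 'rV[R]_d -> R)
  (X : 'I_N -> 'rV[R]_d) : 'M[R]_N := \matrix_(i, j) k (X i) (X j).

Definition kvec (R : rcfType) (d N : nat) (k : 'rV[R]_d -> 'rV[R]_d -> R)
  (X : 'I_N -> 'rV[R]_d) (x : 'rV[R]_d) : 'rV[R]_N := \row_i k x (X i).

Definition post_var (R : rcfType) (d N : nat) (k : 'rV[R]_d -> 'rV[R]_d -> R)
  (sn2 : R) (X : 'I_N -> 'rV[R]_d) (x : 'rV[R]_d) : R :=
  k x x - (kvec k X x *m invmx (gram k X + sn2%:M) *m (kvec k X x)^T) 0 0.

(* |B_rho(x)|: number of training points (with multiplicity) within rho of x. *)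
Definition ball_card (R : rcfType) (d N : nat) (X : 'I_N -> 'rV[R]_d)
  (x : 'rV[R]_d) (rho : R) : nat :=
  #|[set i : 'I_N | enorm (X i - x) <= rho]|.

From HB Require Import structures.
From mathcomp Require Import all_boot all_order all_algebra.
From mathcomp Require Import ring lra.
Set Implicit Arguments. Unset Strict Implicit. Unset Printing Implicit Defensive.
Import Order.TTheory GRing.Theory Num.Theory.
Local Open Scope ring_scope.

(* For a symmetric positive definite A, v A^-1 v^T is the maximum over c of
   2 c.v - c A c^T (attained at c = v A^-1).  Taking for c a constant weight
   on the training points of the ball B_rho(x) and bounding every kernel value
   by kappa(0) from above and by kappa(rho) from below on the ball gives a
   quadratic in the weight whose minimum is the claimed bound. *)

Lemma quad_mxE (R : comNzRingType) (N : nat) (M : 'M[R]_N) (u : 'rV[R]_N) :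
  (u *m M *m u^T) 0 0 = \sum_i \sum_j u 0 i * u 0 j * M i j.
Proof.
rewrite mxE; under eq_bigr => j _ do rewrite !mxE big_distrl /=.
rewrite exchange_big /=; apply: eq_bigr => i _; apply: eq_bigr => j _.
by rewrite mulrAC.
Qed.

Lemma quad_invmx_ge (R : realFieldType) (N : nat) (A : 'M[R]_N) (v c : 'rV[R]_N) :
  A^T = A -> A \in unitmx -> (forall u : 'rV[R]_N, 0 <= (u *m A *m u^T) 0 0) ->
  2 * (c *m v^T) 0 0 - (c *m A *m c^T) 0 0 <= (v *m invmx A *m v^T) 0 0.
Proof.
move=> AT Aunit Apsd; set w := v *m invmx A.
have vE : v = w *m A by rewrite /w mulmxKV.
have wvE : w *m v^T = w *m A *m w^T by rewrite {1}vE trmx_mul AT mulmxA.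
have wAcE : (w *m A *m c^T) 0 0 = (c *m v^T) 0 0.
  rewrite -vE -[in LHS](trmxK (v *m c^T)) trmx_mul trmxK.
  by rewrite [LHS]mxE.
have cAwE : (c *m A *m w^T) 0 0 = (c *m v^T) 0 0.
  by rewrite -mulmxA -{1}AT -trmx_mul -vE.
(* expand 0 <= (w - c) A (w - c)^T *)
have := Apsd (w - c); rewrite wvE linearB /= !mulmxBl !mulmxBr !mxE.
rewrite !mxE in wAcE cAwE; lra.
Qed.

Section RegularizedGram.

Variables (R : rcfType) (d N : nat) (k : 'rV[R]_d -> 'rV[R]_d -> R).
Variables (sn2 : R) (X : 'I_N -> 'rV[R]_d).
Hypothesis ksym : symmetric_kernel k.
Hypothesis kpsd : psd_kernel k.
Hypothesis sn2_gt0 : 0 < sn2.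

Let A := gram k X + sn2%:M.

Lemma quad_gram_ge0 (u : 'rV[R]_N) : 0 <= (u *m gram k X *m u^T) 0 0.
Proof.
rewrite quad_mxE; under eq_bigr do under eq_bigr do rewrite mxE.
exact: kpsd.
Qed.

Lemma quad_regularized_gram (u : 'rV[R]_N) :
  (u *m A *m u^T) 0 0 = (u *m gram k X *m u^T) 0 0 + sn2 * \sum_i u 0 i ^+ 2.
Proof.
rewrite /A mulmxDr mul_mx_scalar mulmxDl -scalemxAl [LHS]mxE.
congr (_ + _); rewrite !mxE; congr (_ * _).
by apply: eq_bigr => i _; rewrite mxE expr2.
Qed.

Lemma quad_regularized_gram_ge0 (u : 'rV[R]_N) : 0 <= (u *m A *m u^T) 0 0.
Proof.
rewrite quad_regularized_gram addr_ge0 ?quad_gram_ge0 // mulr_ge0 ?(ltW sn2_gt0) //.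
by apply: sumr_ge0 => i _; apply: sqr_ge0.
Qed.

Lemma regularized_gram_tr : A^T = A.
Proof. by apply/matrixP => i j; rewrite !mxE ksym eq_sym. Qed.

Lemma regularized_gram_unit : A \in unitmx.
Proof.
rewrite unitmxE unitfE; apply/negP => /det0P [u /eqP u_neq0 uA0].
have : (u *m A *m u^T) 0 0 = 0 by rewrite uA0 mul0mx mxE.
rewrite quad_regularized_gram => quad0.
have sq0 : \sum_i u 0 i ^+ 2 = 0.
  have := quad_gram_ge0 u.
  have : 0 <= \sum_i u 0 i ^+ 2 by apply: sumr_ge0 => i _; apply: sqr_ge0.
  move: quad0 sn2_gt0; nra.
apply: u_neq0; apply/matrixP => i j; rewrite (ord1 i) mxE; apply/eqP.
by rewrite -sqrf_eq0; apply/eqP/(psumr_eq0P (fun i _ => sqr_ge0 (u 0 i)) sq0).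
Qed.

Lemma post_var_le_weighted (x : 'rV[R]_d) (c : 'rV[R]_N) :
  post_var k sn2 X x <= k x x - 2 * (c *m (kvec k X x)^T) 0 0
    + (c *m gram k X *m c^T) 0 0 + sn2 * \sum_i c 0 i ^+ 2.
Proof.
have := quad_invmx_ge (kvec k X x) c regularized_gram_tr regularized_gram_unit
  quad_regularized_gram_ge0.
rewrite quad_regularized_gram /post_var -/A; lra.
Qed.

Lemma post_var_le_uniform_weight (x : 'rV[R]_d) (B : {set 'I_N}) (a k0 kB : R) :
  0 <= a -> (forall i j, k (X i) (X j) <= k0) ->
  (forall j, j \in B -> kB <= k x (X j)) ->
  post_var k sn2 X x <= k x x - 2 * (a * kB * #|B|%:R)
    + (a * #|B|%:R) ^+ 2 * k0 + sn2 * (a ^+ 2 * #|B|%:R).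
Proof.
move=> a_ge0 k_le kB_le.
set c : 'rV[R]_N := \row_j (if j \in B then a else 0).
have cE j : c 0 j = if j \in B then a else 0 by rewrite mxE.
have c_ge0 j : 0 <= c 0 j by rewrite cE; case: ifP.
have sum_c : \sum_j c 0 j = a * #|B|%:R.
  by rewrite (eq_bigr _ (fun j _ => cE j)) -big_mkcond sumr_const mulr_natr.
have sum_c2 : \sum_j c 0 j ^+ 2 = a ^+ 2 * #|B|%:R.
  under eq_bigr => j _ do rewrite cE (fun_if (fun t => t ^+ 2)) expr0n /=.
  by rewrite -big_mkcond sumr_const mulr_natr.
have cKc_le : (c *m gram k X *m c^T) 0 0 <= (a * #|B|%:R) ^+ 2 * k0.
  rewrite quad_mxE -sum_c expr2 mulr_suml mulr_suml.
  apply: ler_sum => i _; rewrite mulr_sumr mulr_suml.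
  apply: ler_sum => j _; rewrite [gram _ _ _ _]mxE.
  by apply: ler_wpM2l; rewrite ?mulr_ge0.
have cv_ge : a * kB * #|B|%:R <= (c *m (kvec k X x)^T) 0 0.
  rewrite mxE; under eq_bigr => j _ do rewrite cE !mxE (fun_if (fun t => t * k x (X j))) mul0r.
  rewrite -big_mkcond mulr_natr -sumr_const.
  by apply: ler_sum => j jB; apply: ler_wpM2l; rewrite ?kB_le.
have := post_var_le_weighted x c; rewrite sum_c2.
have := ltW sn2_gt0; lra.
Qed.

End RegularizedGram.

Lemma uniform_weight_bound_at_optimum (R : fieldType) (k0 kB sn2 m : R) :
  m != 0 -> m * k0 + sn2 != 0 ->
  let a := kB / (m * k0 + sn2) in
  k0 - 2 * (a * kB * m) + (a * m) ^+ 2 * k0 + sn2 * (a ^+ 2 * m) =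
    k0 - kB ^+ 2 / (k0 + sn2 / m).
Proof. by move=> m_neq0 D_neq0 a; rewrite /a; field; rewrite mulrC D_neq0 m_neq0. Qed.

Theorem corollary3p1 (R : rcfType) (d : nat) (kappa : R -> R)
  (hpsd : psd_kernel (@iso_kernel R d kappa))
  (hsym : symmetric_kernel (@iso_kernel R d kappa))
  (hmono : nonincreasing_on_nonneg kappa)
  (sn2 : R) (hsn2 : 0 < sn2)
  (N : nat) (X : 'I_N -> 'rV[R]_d)
  (x : 'rV[R]_d) (rho : R) (hrho : 0 < rho)
  (hB : (1 <= ball_card X x rho)%N) (hk : 0 <= kappa rho) :
  post_var (@iso_kernel R d kappa) sn2 X x <=
    kappa 0 - kappa rho ^+ 2 / (kappa 0 + sn2 / (ball_card X x rho)%:R).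
Proof.
set B := [set i | enorm (X i - x) <= rho]; rewrite /ball_card -/B in hB *.
set m : R := #|B|%:R; have m_gt0 : 0 < m by rewrite ltr0n.
have k_le i j : iso_kernel kappa (X i) (X j) <= kappa 0 by apply/hmono/sqrtr_ge0.
have kB_le j : j \in B -> kappa rho <= iso_kernel kappa x (X j).
  by rewrite inE hsym => jB; apply/hmono/jB/sqrtr_ge0.
have kxx : iso_kernel kappa x x = kappa 0.
  by rewrite /iso_kernel /enorm big1 ?sqrtr0 // => i _; rewrite !mxE subrr expr0n.
have kappa0_ge0 : 0 <= kappa 0 := le_trans hk (hmono _ _ (lexx 0) (ltW hrho)).
have D_gt0 : 0 < m * kappa 0 + sn2.
  by have := mulr_ge0 (ltW m_gt0) kappa0_ge0; lra.
have := post_var_le_uniform_weight hsym hpsd hsn2 (divr_ge0 hk (ltW D_gt0)) k_le kB_le.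
by rewrite kxx uniform_weight_bound_at_optimum ?lt0r_neq0.
Qed.
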